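(* If $\mathsf{S}_{\mathrm{L}}(\{\mathcal{I}_j\})<\mathsf{M}^\star(\{\mathcal{I}_j\})$, then there exists some $\ell\in\bigcup_j\mathcal{I}_j$ for which $\mathsf{S}_{\mathrm{L}}(\{\mathcal{I}_j\setminus\{\ell\}\})=\mathsf{S}_{\mathrm{L}}(\{\mathcal{I}_j\})$.
   Context: Network model: $n$ clients $c_1,\dots,c_n$, finite sets $\mathcal{I}_1,\dots,\mathcal{I}_n$ of message indices (the family $\{\mathcal{I}_j\}$); messages $X_i$ ($i\in\bigcup_j\mathcal{I}_j$) i.i.d. uniform on a finite field $\mathbb{F}$ with $|\mathbb{F}|>n$; client $c_j$ holds $\{X_i:i\in\mathcal{I}_j\}$; $\underline{X}$ is the vector of all messages. $\{\mathcal{I}_j\setminus\{\ell\}\}$ denotes the family $(\mathcal{I}_1\setminus\{\ell\},\dots,\mathcal{I}_n\setminus\{\ell\})$. A protocol: in each of $t$ rounds one client broadcasts to all an element of $\mathbb{F}$ that is a function of its own messages, the round index, and all previous broadcasts; $\mathbf{T}(\underline{X})\in\mathbb{F}^t$ collects the broadcasts ($t$ = number of transmissions). Linear protocol: each broadcast is an $\mathbb{F}$-linear combination of the transmitter's messages, so $\mathbf{T}(\underline{X})=A\underline{X}$. A protocol generates a SK if there are functions $\mathsf{k}_j$ with $K=\mathsf{k}_1(\{X_i:i\in\mathcal{I}_1\},\mathbf{T}(\underline{X}))$ such that (i) $\mathsf{k}_j(\{X_i:i\in\mathcal{I}_j\},\mathbf{T}(\underline{X}))=K$ a.s. for all $j$;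 (ii) $K$ is uniform on $\mathbb{F}$; (iii) $I(K;\mathbf{T}(\underline{X}))=0$. $\mathsf{S}_{\mathrm{L}}$ is the minimum number of transmissions of a linear protocol generating a SK ($\infty$ if none). $\mathsf{M}^\star(\{\mathcal{I}_j\})$ is the optimal value of: minimize $\sum_{j\in[n]}a_j$ over $a\in\mathbb{Z}^n$ subject to $\sum_{j\in\mathcal{S}}a_j\ge\left|\bigcap_{j\in[n]\setminus\mathcal{S}}\bar{\mathcal{I}}_j\right|$ for every nonempty proper $\mathcal{S}\subsetneq[n]$, where $\bar{\mathcal{I}}_j=(\bigcup_i\mathcal{I}_i)\setminus\mathcal{I}_j$. (It is known that a protocol achieving omniscience, i.e. after which every client can recover all of $\underline{X}$ with probability 1, needs at least $\mathsf{M}^\star$ transmissions.) *)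

From HB Require Import structures.
From mathcomp Require Import all_boot all_order all_algebra.
From Stdlib Require Import ClassicalEpsilon.
Set Implicit Arguments. Unset Strict Implicit. Unset Printing Implicit Defensive.
Import Order.TTheory GRing.Theory Num.Theory.
Local Open Scope ring_scope.

(* Message indices are drawn from 'I_m; client j (j : 'I_n) holds the
   messages indexed by I j.  The message vector X is a column vector
   'cV[F]_m, uniform on F^m (messages with indices outside the union of
   the I j are held by nobody and are irrelevant). *)

Definition asb (P : Prop) : bool :=
  if excluded_middle_informative P then true else false.

Definition restr (F : finFieldType) (m : nat) (S : {set 'I_m})
  (X : 'cV[F]_m) : 'cV[F]_m :=
  \col_i (if i \in S then X i 0 else 0).

Definition Pr (F : finFieldType) (m : nat) (E : pred 'cV[F]_m) : rat :=
  (#|E|%:R / #|{: 'cV[F]_m}|%:R)%R.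

(* A linear protocol with t transmissions: in round r client (s r)
   broadcasts row r of A times X, A r i = 0 unless i is held by s r.
   The vector of all broadcasts is T(X) = A *m X. *)
Definition lin_protocol (F : finFieldType) (n m t : nat)
  (I : 'I_n -> {set 'I_m}) (s : 'I_t -> 'I_n) (A : 'M[F]_(t, m)) : Prop :=
  forall (r : 'I_t) (i : 'I_m), i \notin I (s r) -> A r i = 0.

(* The protocol (s, A) generates a secret key: there are key functions k j,
   client j computing k j (its own messages) (the broadcasts), such that
   (i) all clients agree (for every realisation, i.e. a.s. under the
       uniform distribution), (ii) the key is uniform on F,
   (iii) the key is independent of the broadcasts (I(K;T) = 0). *)
Definition generates_SK (F : finFieldType) (n m t : nat)
  (I : 'I_n -> {set 'I_m}) (s : 'I_t -> 'I_n) (A : 'M[F]_(t, m)) : Prop :=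
  exists k : 'I_n -> 'cV[F]_m -> 'cV[F]_t -> F,
    let key j (X : 'cV[F]_m) := k j (restr (I j) X) (A *m X) in
    [/\ (forall j j' X, key j X = key j' X),
        (forall j (c : F), Pr (fun X => key j X == c) = (1 / #|F|%:R)%R) &
        (forall j (c : F) (v : 'cV[F]_t),
           Pr (fun X => (key j X == c) && (A *m X == v))
           = (Pr (fun X => key j X == c) * Pr (fun X => A *m X == v))%R)].

Definition SK_achievable (F : finFieldType) (n m : nat)
  (I : 'I_n -> {set 'I_m}) (t : nat) : Prop :=
  exists (s : 'I_t -> 'I_n) (A : 'M[F]_(t, m)),
    lin_protocol I s A /\ generates_SK I s A.

(* S_L : minimal number of transmissions; None encodes +infinity *)
Definition SL (F : finFieldType) (n m : nat) (I : 'I_n -> {set 'I_m})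
  : option nat :=
  match excluded_middle_informative
          (exists t, asb (SK_achievable F I t)) with
  | left H => Some (ex_minn H)
  | right _ => None
  end.

Definition Uall (n m : nat) (I : 'I_n -> {set 'I_m}) : {set 'I_m} :=
  \bigcup_(j < n) I j.

Definition Mfeasible (n m : nat) (I : 'I_n -> {set 'I_m}) (a : 'I_n -> int)
  : Prop :=
  forall S : {set 'I_n}, S != set0 -> S != setT ->
    (#|\bigcap_(j in ~: S) (Uall I :\: I j)|%:Z <= \sum_(j in S) a j)%R.

(* M* : optimal value of the integer program; None encodes -infinity
   (the program is always feasible, so the only alternative to an attained
   minimum is unboundedness, which happens only for n = 1) *)
Definition Mstar (n m : nat) (I : 'I_n -> {set 'I_m}) : option int :=
  match excluded_middle_informative
          (exists a, Mfeasible I a /\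
             forall b, Mfeasible I b -> (\sum_j a j <= \sum_j b j)%R) with
  | left H => Some (\sum_j (proj1_sig (constructive_indefinite_description _ H)) j)%R
  | right _ => None
  end.

Definition SL_lt_Mstar (sl : option nat) (ms : option int) : Prop :=
  match sl, ms with
  | Some s, Some v => (s%:Z < v)%R
  | _, _ => False
  end.

(* An optimal linear protocol uses fewer than M* transmissions, so by the
   cut-set count behind M* it is not omniscient: for some client j there is a
   nonzero v with A v = 0 supported on the messages j lacks.  Take l with
   v_l <> 0 and erase column l of A.  All events about the key and A X are
   invariant under X |-> X + c v, and X |-> (X with X_l := 0) + (X_l / v_l) v
   is a bijection, so the erased protocol still yields a uniform key
   independent of the broadcasts, now for the family without message l.
   Since removing a message cannot decrease S_L, equality follows. *)

From HB Require Import structures.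
From mathcomp Require Import all_boot all_order all_algebra.
From Stdlib Require Import ClassicalEpsilon Classical.
Set Implicit Arguments. Unset Strict Implicit. Unset Printing Implicit Defensive.
Import Order.TTheory GRing.Theory Num.Theory.
Local Open Scope ring_scope.

Lemma mx_neq0_entry (R : nmodType) (p q : nat) (A : 'M[R]_(p, q)) :
  A != 0 -> exists i j, A i j != 0.
Proof.
move=> A0; have /existsP[[i j] Aij] : [exists ij : 'I_p * 'I_q, A ij.1 ij.2 != 0].
  apply: contraNT A0 => /existsPn A0; apply/eqP/matrixP => i j.
  by rewrite mxE; apply/eqP/negbNE/(A0 (i, j)).
by exists i, j.
Qed.

Lemma wide_kernel_neq0 (F : fieldType) (k w : nat) (B : 'M[F]_(k, w)) :
  (k < w)%N -> exists2 u : 'cV[F]_w, u != 0 & B *m u = 0.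
Proof.
move=> kw; have : cokermx B != 0.
  rewrite -mxrank_eq0 mxrank_coker subn_eq0 -ltnNge.
  exact: leq_ltn_trans (rank_leq_row B) kw.
case/mx_neq0_entry => i [j Cij]; exists (col j (cokermx B)).
  by apply: contraNneq Cij => /matrixP/(_ i 0); rewrite !mxE => ->.
by rewrite colE mulmxA mulmx_coker mul0mx.
Qed.

Section ExtendByZero.
Variables (R : pzSemiRingType) (m : nat) (W : {set 'I_m}).

Definition extend0 (u : 'cV[R]_#|W|) : 'cV[R]_m :=
  \col_i \sum_(p | enum_val p == i) u p 0.

Lemma extend0_enum_val u p : extend0 u (enum_val p) 0 = u p 0.
Proof.
rewrite mxE (big_pred1 p) // => p'.
by apply/eqP/eqP => [/enum_val_inj|->].
Qed.

Lemma extend0_support u i : extend0 u i 0 != 0 -> i \in W.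
Proof.
rewrite mxE; case: (pickP (fun p : 'I_#|W| => enum_val p == i)).
  by move=> p /eqP <- _; apply: enum_valP.
by move=> none; rewrite big_pred0 ?eqxx.
Qed.

Lemma mul_extend0 q (B : 'M[R]_(q, m)) u :
  B *m extend0 u = colsub enum_val B *m u.
Proof.
apply/matrixP => r c; rewrite (ord1 c) !mxE.
under eq_bigr => i _ do rewrite mxE big_distrr /=.
rewrite (exchange_big_dep xpredT) //=; apply: eq_bigr => p _.
by rewrite (big_pred1 (enum_val p)) ?mxE // => i; rewrite /= eq_sym.
Qed.

End ExtendByZero.

Lemma restrI (F : finFieldType) (m : nat) (S T : {set 'I_m}) (X : 'cV[F]_m) :
  restr S (restr T X) = restr (S :&: T) X.
Proof. by apply/matrixP => i j; rewrite !mxE inE; case: (i \in S). Qed.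

Lemma eq_Pr (F : finFieldType) (m : nat) (E E' : pred 'cV[F]_m) :
  E =1 E' -> Pr E = Pr E'.
Proof. by move=> eE; rewrite /Pr (eq_card eE). Qed.

Lemma generates_SK_sub (F : finFieldType) (n m t : nat)
  (I I' : 'I_n -> {set 'I_m}) (s : 'I_t -> 'I_n) (A : 'M[F]_(t, m)) :
  (forall j, I' j \subset I j) -> generates_SK I' s A -> generates_SK I s A.
Proof.
move=> sub [k [agr unif ind]].
have restr_sub j X : restr (I' j) (restr (I j) X) = restr (I' j) X.
  by rewrite restrI (setIidPl (sub j)).
exists (fun j x => k j (restr (I' j) x)) => /=; split=> [j j' X|j c|j c v].
- by rewrite !restr_sub (agr j j').
- by under eq_Pr => X do rewrite restr_sub; apply: unif.
- under eq_Pr => X do rewrite restr_sub.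
  under [Pr (fun X => _ == c)]eq_Pr => X do rewrite restr_sub.
  exact: ind.
Qed.

Lemma SK_achievable_sub (F : finFieldType) (n m t : nat)
  (I I' : 'I_n -> {set 'I_m}) :
  (forall j, I' j \subset I j) -> SK_achievable F I' t -> SK_achievable F I t.
Proof.
move=> sub [s [A [lin gen]]]; exists s, A.
split; last exact: generates_SK_sub gen.
by move=> r i iI; apply: lin; apply: contra iI; apply/subsetP/sub.
Qed.

Lemma Pr_restr_shift_invariant (F : finFieldType) (m : nat) (v : 'cV[F]_m)
  (l : 'I_m) (E : pred 'cV[F]_m) :
  v l 0 != 0 -> (forall X c, E (X + c *: v) = E X) ->
  Pr (fun X => E (restr (~: [set l]) X)) = Pr E.
Proof.
move=> vl0 Ev.
pose b X := restr (~: [set l]) X + (X l 0 / v l 0) *: v.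
have b_l X : b X l 0 = X l 0 by rewrite !mxE !inE eqxx /= add0r divfK.
have b_inj : injective b.
  move=> X Y eXY; apply/matrixP => i j; rewrite (ord1 j).
  have el : X l 0 = Y l 0 by rewrite -b_l eXY b_l.
  have /matrixP/(_ i 0) : restr (~: [set l]) X = restr (~: [set l]) Y.
    by move: eXY; rewrite /b el => /addIr.
  by rewrite !mxE !inE; case: eqVneq => [->|].
rewrite /Pr -(cardsE E) -(card_preimset _ b_inj); congr (_%:R / _).
by apply: eq_card => X; rewrite !inE /b -!topredE /= Ev.
Qed.

Section HiddenMessage.
Variables (F : finFieldType) (n m t : nat) (I : 'I_n -> {set 'I_m}).
Variables (s : 'I_t -> 'I_n) (A : 'M[F]_(t, m)).
Variables (j0 : 'I_n) (v : 'cV[F]_m) (l : 'I_m).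
Hypotheses (Av0 : A *m v = 0) (v_out : forall i, i \in I j0 -> v i 0 = 0).
Hypothesis vl0 : v l 0 != 0.

Let erase (X : 'cV[F]_m) := restr (~: [set l]) X.

Definition erase_col : 'M[F]_(t, m) :=
  \matrix_(r, i) (if i == l then 0 else A r i).

Lemma mul_erase_col X : erase_col *m X = A *m erase X.
Proof.
apply/matrixP => r c; rewrite !mxE; apply: eq_bigr => i _.
by rewrite !mxE !inE (ord1 c); case: eqP; rewrite ?mul0r ?mulr0.
Qed.

Lemma restr_setD1 (S : {set 'I_m}) X :
  restr S (restr (S :\ l) X) = restr S (erase X).
Proof. by rewrite !restrI setDE setIA setIid. Qed.

Lemma mul_shift X c : A *m (X + c *: v) = A *m X.
Proof. by rewrite mulmxDr -scalemxAr Av0 scaler0 addr0. Qed.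

Lemma SK_achievable_setD1_hidden :
  lin_protocol I s A -> generates_SK I s A ->
  SK_achievable F (fun j => I j :\ l) t.
Proof.
move=> lin [k [agr unif ind]].
pose key j X := k j (restr (I j) X) (A *m X).
have key_shift j X c : key j (X + c *: v) = key j X.
  rewrite /key !(agr j j0) mul_shift; congr k.
  apply/matrixP => i i'; rewrite !mxE; case: ifP => // /v_out ->.
  by rewrite mulr0 addr0.
have Pr_erase j (p : F -> 'cV[F]_t -> bool) :
    Pr (fun X => p (k j (restr (I j) (restr (I j :\ l) X)) (erase_col *m X))
                   (erase_col *m X))
    = Pr (fun X => p (key j X) (A *m X)).
  rewrite -(Pr_restr_shift_invariant (E := fun X => p (key j X) (A *m X)) vl0).
    by apply: eq_Pr => X; rewrite /= restr_setD1 mul_erase_col.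
  by move=> X c; rewrite /= key_shift mul_shift.
exists s, erase_col; split.
  by move=> r i; rewrite !inE mxE; case: eqP => //= _ /lin.
exists (fun j x => k j (restr (I j) x)) => /=; split.
- by move=> j j' X; rewrite !restr_setD1 mul_erase_col (agr j j').
- by move=> j c; rewrite (Pr_erase j (fun a _ => a == c)); apply: unif.
- move=> j c w; rewrite (Pr_erase j (fun a b => (a == c) && (b == w))).
  rewrite (Pr_erase j (fun a _ => a == c)) (Pr_erase j (fun _ b => b == w)).
  exact: ind.
Qed.

End HiddenMessage.

Definition rounds (n t : nat) (s : 'I_t -> 'I_n) (j : 'I_n) : nat :=
  #|[set r | s r == j]|.

Lemma sum_rounds (n t : nat) (s : 'I_t -> 'I_n) (S : {set 'I_n}) :
  \sum_(j in S) (rounds s j)%:Z = #|[set r | s r \in S]|%:Z.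
Proof.
rewrite -[RHS]intz -sum1_card (partition_big s (mem S)) /=; last first.
  by move=> r; rewrite inE.
rewrite sumMz; apply: eq_bigr => j jS; rewrite intz sum1dep_card.
congr Posz; apply: eq_card => r; rewrite !inE.
by case: eqP => [->|]; rewrite ?jS ?andbF.
Qed.

(* For a linear protocol, client j recovers all messages from its own ones and
   A X iff no nonzero kernel vector of A is supported on the messages j lacks. *)
Definition omniscient (F : fieldType) (n m t : nat) (I : 'I_n -> {set 'I_m})
  (A : 'M[F]_(t, m)) : Prop :=
  forall j (v : 'cV[F]_m), A *m v = 0 ->
    (forall i, v i 0 != 0 -> i \in Uall I :\: I j) -> v = 0.

(* If the clients of S spend fewer rounds than the number of messages W held by
   nobody outside S, the submatrix of A on these rows and the columns W has a
   nonzero kernel vector; extended by zero it lies in the kernel of A, because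
   the rows of clients outside S vanish on W. *)
Lemma omniscient_Mfeasible (F : finFieldType) (n m t : nat)
  (I : 'I_n -> {set 'I_m}) (s : 'I_t -> 'I_n) (A : 'M[F]_(t, m)) :
  lin_protocol I s A -> omniscient I A -> Mfeasible I (fun j => (rounds s j)%:Z).
Proof.
move=> lin omn S S0 ST; rewrite sum_rounds lez_nat leqNgt; apply/negP => lt.
set W := \bigcap_(j in ~: S) (Uall I :\: I j) in lt.
set R := [set r | s r \in S] in lt.
have [j0 j0S] : exists j0, j0 \in ~: S.
  by apply/set0Pn; apply: contraNneq ST => SC0; rewrite -[S]setCK SC0 setC0.
have [u u0 Bu] := wide_kernel_neq0 (rowsub (enum_val : 'I_#|R| -> 'I_t)
  (colsub (enum_val : 'I_#|W| -> 'I_m) A)) lt.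
have Au : A *m extend0 u = 0.
  rewrite mul_extend0; apply/matrixP => r c; rewrite (ord1 c) [RHS]mxE.
  have [rS|rNS] := boolP (s r \in S).
    have rR : r \in R by rewrite inE.
    move/matrixP: Bu => /(_ (enum_rank_in rR r) 0).
    by rewrite mul_rowsub_mx mxE (enum_rankK_in rR rR) [RHS]mxE.
  rewrite mxE big1 // => p _; rewrite mxE lin ?mul0r //.
  have /bigcapP/(_ (s r)) : enum_val p \in W := enum_valP p.
  by rewrite inE rNS => /(_ isT); rewrite inE => /andP[].
have u_eq0 : extend0 u = 0.
  by apply: (omn j0) => // i /extend0_support /bigcapP; apply.
move/eqP: u0; apply; apply/matrixP => p c.
by rewrite (ord1 c) -extend0_enum_val u_eq0 !mxE.
Qed.

Lemma asbP (P : Prop) : reflect P (asb P).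
Proof. by rewrite /asb; case: excluded_middle_informative => h; constructor. Qed.

Lemma SL_SomeP (F : finFieldType) (n m : nat) (I : 'I_n -> {set 'I_m}) (t : nat) :
  SL F I = Some t <->
  SK_achievable F I t /\ forall t', SK_achievable F I t' -> (t <= t')%N.
Proof.
rewrite /SL; case: excluded_middle_informative => [ex|nex]; split => //.
- case=> <-; case: ex_minnP => t0 /asbP ach0 min0.
  by split=> // t' ach; apply: min0; apply/asbP.
- case=> ach min; congr Some; case: ex_minnP => t0 /asbP ach0 min0.
  by apply/eqP; rewrite eqn_leq min // andbT; apply: min0; apply/asbP.
- by case=> ach _; case: nex; exists t; apply/asbP.
Qed.

Lemma Mstar_le (n m : nat) (I : 'I_n -> {set 'I_m}) (M : int) (a : 'I_n -> int) :
  Mstar I = Some M -> Mfeasible I a -> M <= \sum_j a j.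
Proof.
rewrite /Mstar; case: excluded_middle_informative => // H [<-] fa.
by case: constructive_indefinite_description => b /= [_]; apply.
Qed.

Lemma lt_Mstar_not_omniscient (F : finFieldType) (n m t : nat)
  (I : 'I_n -> {set 'I_m}) (s : 'I_t -> 'I_n) (A : 'M[F]_(t, m)) (M : int) :
  lin_protocol I s A -> Mstar I = Some M -> t%:Z < M -> ~ omniscient I A.
Proof.
move=> lin eM ltM omn; suff : M <= t%:Z by rewrite leNgt ltM.
have -> : t%:Z = \sum_j (rounds s j)%:Z.
  rewrite (eq_bigl (mem setT)) => [|j]; rewrite ?inE // sum_rounds.
  by congr Posz; rewrite -[LHS]card_ord; apply: eq_card => r; rewrite !inE.
exact: Mstar_le eM (omniscient_Mfeasible lin omn).
Qed.

Lemma SK_achievable_setD1_lt_Mstar (F : finFieldType) (n m t : nat)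
  (I : 'I_n -> {set 'I_m}) (M : int) :
  SK_achievable F I t -> Mstar I = Some M -> t%:Z < M ->
  exists2 l, l \in Uall I & SK_achievable F (fun j => I j :\ l) t.
Proof.
move=> [s [A [lin gen]]] eM ltM.
have [j [v [Av0 v_supp v0]]] : exists j (v : 'cV[F]_m),
    [/\ A *m v = 0, forall i, v i 0 != 0 -> i \in Uall I :\: I j & v != 0].
  apply: NNPP => none; have := lt_Mstar_not_omniscient lin eM ltM.
  apply=> j v Av0 v_supp.
  by apply/eqP/negPn/negP => v0; apply: none; exists j, v.
have [l vl0] : exists l, v l 0 != 0.
  by case/mx_neq0_entry: v0 => l [c]; rewrite (ord1 c); exists l.
have v_out i : i \in I j -> v i 0 = 0.
  by move=> iI; apply/eqP; apply: contraTT iI => /v_supp; rewrite inE => /andP[].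
exists l; first by have := v_supp l vl0; rewrite inE => /andP[].
exact: SK_achievable_setD1_hidden Av0 v_out vl0 lin gen.
Qed.

Local Close Scope ring_scope.

Theorem lemma3 (F : finFieldType) (n m : nat) (I : 'I_n -> {set 'I_m})
  (hF : n < #|F|) :
  SL_lt_Mstar (SL F I) (Mstar I) ->
  exists2 l : 'I_m, l \in \bigcup_(j < n) I j &
    SL F (fun j => I j :\ l) = SL F I.
Proof.
rewrite /SL_lt_Mstar; case eSL: (SL F I) => [t|] //.
case eM: (Mstar I) => [M|] // ltM.
have [ach tmin] := iffLR (SL_SomeP F I t) eSL.
have [l lI achl] := SK_achievable_setD1_lt_Mstar ach eM ltM.
exists l => //; apply/SL_SomeP; split=> // t'.
by move/(SK_achievable_sub (fun j => subD1set (I j) l)); apply: tmin.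
Qed.
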